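(* Let $\Gamma=(G,\sigma)$, $G=(V,E)$, be a signed graph and $f:V\to\mathbb R$ a function not identically zero. Let $x$ be a vertex lying in two distinct weak nodal domains $D$ and $D'$ of $f$. Then the set $$B(x)=\{y\in V:\ \text{there exist } m \text{ and a walk } x=x_0\sim x_1\sim\cdots\sim x_m=y \text{ with } f(x_i)=0 \text{ for } i=0,1,\dots,m-1\}$$ is contained in $D\cup D'$ (as vertex sets). In particular, $\{y\in V: y\sim x\}\subseteq D\cup D'$.
   Context: A signed graph is a finite simple undirected graph $G=(V,E)$ with $\sigma:E\to\{+1,-1\}$. A walk is $y_1,\dots,y_m$ ($m\ge2$) with consecutive vertices adjacent. For $f:V\to\mathbb R$, a W-walk of $f$ is a walk such that for any two consecutive nonzeros $y_i,y_j$ along it ($i<j$, $f(y_i)\ne0\ne f(y_j)$, $f(y_l)=0$ for $i<l<j$) one has $f(y_i)\sigma_{y_iy_{i+1}}\cdots\sigma_{y_{j-1}y_j}f(y_j)>0$. On $\Omega=\{x:f(x)\ne0\}$ the relation ''$x=y$ or a W-walk connects $x$ and $y$'' is an equivalence relation with classes $W_1,\dots,W_q$; the weak nodal domains of $f$ are the induced subgraphs on $W_i^0=W_i\cup\{x\in V:\text{there is a W-walk from } x \text{ to some vertex of } W_i\}$. *)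

From mathcomp Require Import all_boot all_order all_algebra.
Set Implicit Arguments. Unset Strict Implicit. Unset Printing Implicit Defensive.
Import Order.TTheory GRing.Theory Num.Theory.
Local Open Scope ring_scope.

Definition signed_graph (V : finType) (R : realFieldType)
  (adj : rel V) (sigma : V -> V -> R) : Prop :=
  [/\ symmetric adj, irreflexive adj,
      (forall u v, adj u v -> sigma u v = 1 \/ sigma u v = -1)
    & (forall u v, adj u v -> sigma u v = sigma v u)].

Definition is_walk (V : finType) (adj : rel V) (s : seq V) : Prop :=
  match s with
  | [::] => False
  | x0 :: p => 0 < size p /\ path adj x0 p
  end%N.

Definition W_walk (V : finType) (R : realFieldType)
  (adj : rel V) (sigma : V -> V -> R) (f : V -> R) (s : seq V) : Prop :=
  match s with
  | [::] => False
  | x0 :: _ =>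
    is_walk adj s /\
    forall i j : nat, (i < j)%N -> (j < size s)%N ->
      f (nth x0 s i) != 0 -> f (nth x0 s j) != 0 ->
      (forall l : nat, (i < l < j)%N -> f (nth x0 s l) = 0) ->
      0 < f (nth x0 s i)
          * (\prod_(i <= k < j) sigma (nth x0 s k) (nth x0 s k.+1))
          * f (nth x0 s j)
  end.

Definition W_conn (V : finType) (R : realFieldType)
  (adj : rel V) (sigma : V -> V -> R) (f : V -> R) (x y : V) : Prop :=
  exists p : seq V, W_walk adj sigma f (x :: p) /\ last x p = y.

Definition W_rel (V : finType) (R : realFieldType)
  (adj : rel V) (sigma : V -> V -> R) (f : V -> R) (x y : V) : Prop :=
  x = y \/ W_conn adj sigma f x y \/ W_conn adj sigma f y x.

Definition W_class (V : finType) (R : realFieldType)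
  (adj : rel V) (sigma : V -> V -> R) (f : V -> R) (w : V) : V -> Prop :=
  fun y => f y != 0 /\ W_rel adj sigma f w y.

Definition weak_nodal_domain (V : finType) (R : realFieldType)
  (adj : rel V) (sigma : V -> V -> R) (f : V -> R) (w : V) : V -> Prop :=
  fun x => W_class adj sigma f w x \/
           exists y, W_class adj sigma f w y /\ W_conn adj sigma f x y.

Definition B_set (V : finType) (R : realFieldType)
  (adj : rel V) (f : V -> R) (x : V) : V -> Prop :=
  fun y => exists p : seq V, [/\ path adj x p, last x p = y &
                              all (fun v => f v == 0) (belast x p)].

From mathcomp Require Import all_boot all_order all_algebra.
From mathcomp Require Import ring.
Set Implicit Arguments. Unset Strict Implicit. Unset Printing Implicit Defensive.
Import Order.TTheory GRing.Theory Num.Theory.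
Local Open Scope ring_scope.

(** Work in the signed double cover: a vertex v has the two lifts (v, +) and
   (v, -); a lift is admissible when f v = 0 or its sign is that of f v, and
   admissible lifts are joined along the edges of the graph so that the sign
   is multiplied by sigma.  W-walks are exactly the projections of paths of
   admissible lifts, so the weak nodal domain of a nonzero vertex w is the
   projection of the component of the cover containing the lift of w.  Two
   distinct domains through x therefore contain the two different lifts of x
   (in particular f x = 0), and every y in B(x) is joined through zeros to
   some lift of x, hence to one of the two components. *)

Lemma mulr_gt0_chain (R : realDomainType) (a b c : R) :
  b != 0 -> 0 < a * b -> 0 < b * c -> 0 < a * c.
Proof.
move=> b0 ab bc; have := mulr_gt0 ab bc.
rewrite (_ : a * b * (b * c) = b ^+ 2 * (a * c)); last by ring.
by rewrite pmulr_rgt0 // exprn_even_gt0 // b0 orbT.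
Qed.

Lemma signr_mulr_gt0 (R : realDomainType) (b : bool) (x : R) :
  (0 < (-1) ^+ b * x) = (x != 0) && (b == (x < 0)).
Proof. by case: b; rewrite ?mulN1r ?mul1r ?oppr_gt0; case: ltrgt0P. Qed.

Lemma last_iota m n : last m (iota m.+1 n) = (m + n)%N.
Proof. by elim: n m => [|n IH] m /=; rewrite ?addn0 // IH addnS. Qed.

Lemma path_map_iota (T : Type) (e : rel T) (g : nat -> T) (n : nat) :
  (forall k, (k < n)%N -> e (g k) (g k.+1)) ->
  path e (g 0%N) [seq g k | k <- iota 1 n].
Proof.
elim: n g => [//|n IH] g edge /=; rewrite edge //=.
rewrite -[iota 2 n]/(iota (1 + 1) n) iotaDl -map_comp.
by apply: (IH (fun k => g k.+1)) => k kn; apply: edge.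
Qed.

Section SignCoherence.
Variables (R : realDomainType) (n : nat) (F sg : nat -> R).

Definition sign_coherent : Prop :=
  forall i j, (i < j)%N -> (j <= n)%N -> F i != 0 -> F j != 0 ->
    0 < F i * (\prod_(i <= k < j) sg k) * F j.

Lemma sign_coherent_of_consecutive :
  (forall i j, (i < j)%N -> (j <= n)%N -> F i != 0 -> F j != 0 ->
     (forall l, (i < l < j)%N -> F l = 0) ->
     0 < F i * (\prod_(i <= k < j) sg k) * F j) ->
  sign_coherent.
Proof.
move=> consecutive i j; elim/ltn_ind: j => j IH ij jn Fi Fj.
pose inner l := (i < l < j)%N && (F l != 0).
have [|no_inner] := boolP (has inner (iota 0 j)); last first.
  apply: consecutive => // l /andP [il lj]; apply/eqP.
  by move/hasPn: no_inner => /(_ l); rewrite mem_iota lj /inner il lj => /(_ isT) /negbNE.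
move=> /hasP [l0 _ inner_l0].
have inner_le_j m : inner m -> (m <= j)%N by case/andP=> /andP [_ /ltnW].
have [l /andP [/andP [il lj] Fl] l_max] := ex_maxnP (ex_intro _ l0 inner_l0) inner_le_j.
have Fil := IH l lj il (leq_trans (ltnW lj) jn) Fi Fl.
have Flj : 0 < F l * (\prod_(l <= k < j) sg k) * F j.
  apply: consecutive => // m /andP [lm mj]; apply/eqP; apply: contraTT (lm) => Fm.
  by rewrite -leqNgt l_max // /inner Fm (ltn_trans il lm) mj.
rewrite (big_cat_nat (ltnW il) (ltnW lj)) /= mulrA -mulrA.
by apply: (mulr_gt0_chain Fl) => //; rewrite mulrA.
Qed.

Lemma sign_coherent_choice :
  (forall k, (k < n)%N -> sg k != 0) -> sign_coherent ->
  exists c : bool, forall t, (t <= n)%N -> F t != 0 ->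
     0 < (-1) ^+ c * (\prod_(0 <= k < t) sg k) * F t.
Proof.
move=> sg0 coherent.
pose nz t := (t <= n)%N && (F t != 0).
have [/hasP [t0 _ nz_t0] | none] := boolP (has nz (iota 0 n.+1)); last first.
  exists false => t tn Ft; move/hasPn: none => /(_ t).
  by rewrite mem_iota /= ltnS /nz tn Ft => /(_ isT).
have [i0 /andP [i0n Fi0] i0_min] := ex_minnP (ex_intro _ t0 nz_t0).
set P0 := \prod_(0 <= k < i0) sg k.
exists (P0 * F i0 < 0).
have base : 0 < (-1) ^+ (P0 * F i0 < 0)%R * P0 * F i0.
  rewrite -mulrA -normrEsign normr_gt0 mulf_neq0 // prodf_seq_neq0.
  by apply/allP => k; rewrite mem_index_iota => /andP [_ ki0]; apply: sg0 (leq_trans ki0 i0n).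
move=> t tn Ft; have := i0_min t; rewrite /nz tn Ft => /(_ isT).
rewrite leq_eqVlt => /orP [/eqP <- // | i0t].
rewrite (big_cat_nat (leq0n i0) (ltnW i0t)) /= mulrA -/P0 -mulrA.
by apply: (mulr_gt0_chain Fi0 base); rewrite mulrA coherent.
Qed.
End SignCoherence.

Section SignedDoubleCover.
Variables (V : finType) (R : realFieldType) (adj : rel V) (sigma : V -> V -> R) (f : V -> R).
Hypothesis hG : signed_graph adj sigma.

Lemma adj_sym : symmetric adj.
Proof. by case: hG. Qed.

Lemma sigma_sym u v : adj u v -> sigma u v = sigma v u.
Proof. by case: hG => _ _ _; apply. Qed.

Lemma sigmaE u v : adj u v -> sigma u v = (-1) ^+ (sigma u v < 0)%R.
Proof. by case: hG => _ _ sign _ /sign [] ->; rewrite ?ltr10 // oppr_lt0 ltr01. Qed.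

(* A lift (v, b) carries the sign (-1)^b. *)
Definition admissible (s : V * bool) : bool := (f s.1 == 0) || (s.2 == (f s.1 < 0)).

Definition lift (v : V) : V * bool := (v, f v < 0).

Definition cover_edge : rel (V * bool) := fun s t =>
  [&& adj s.1 t.1, t.2 == s.2 (+) (sigma s.1 t.1 < 0), admissible s & admissible t].

Lemma admissible_lift v : admissible (lift v).
Proof. by rewrite /admissible eqxx orbT. Qed.

Lemma admissible_nonzero v b : f v != 0 -> admissible (v, b) -> (v, b) = lift v.
Proof. by rewrite /admissible /= => /negbTE -> /eqP ->. Qed.

Lemma admissibleE s : admissible s = (f s.1 == 0) || (0 < (-1) ^+ s.2 * f s.1).
Proof. by rewrite signr_mulr_gt0 /admissible; case: eqP. Qed.

Lemma cover_edge_sym : symmetric cover_edge.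
Proof.
move=> [u b] [v c]; rewrite /cover_edge /= adj_sym.
case: (boolP (adj v u)) => //= vu; rewrite (sigma_sym vu) [admissible (u, b) && _]andbC.
by case: (sigma u v < 0); case: b; case: c.
Qed.

Lemma cover_connect_sym : connect_sym cover_edge.
Proof. exact: sym_connect_sym cover_edge_sym. Qed.

Lemma path_admissible s q : path cover_edge s q -> (0 < size q)%N -> all admissible (s :: q).
Proof.
elim: q s => // t q IH s /= /andP [/and4P [_ _ -> adm_t] tq] _ /=.
by case: q IH tq => [|u q] IH tq; [rewrite /= adm_t | apply: IH].
Qed.

Lemma connect_admissible s t : admissible s -> connect cover_edge s t -> admissible t.
Proof.
move=> adm_s /connectP [[|u q] sq ->] //.
by apply: (allP (path_admissible sq isT)); apply: mem_last.
Qed.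

Lemma cover_path_sign s q i j : path cover_edge s q -> (i <= j <= size q)%N ->
  (-1) ^+ (nth s (s :: q) j).2 = (-1) ^+ (nth s (s :: q) i).2 *
    \prod_(i <= k < j) sigma (nth s (s :: q) k).1 (nth s (s :: q) k.+1).1 :> R.
Proof.
move=> /(pathP s) edge; elim: j => [|j IH] /andP [ij jq].
  by move: ij; rewrite leqn0 => /eqP ->; rewrite big_geq ?mulr1.
case: (ltngtP i j.+1) ij => // [ij | <-] _; last by rewrite big_geq ?mulr1.
have /and4P [uv /eqP -> _ _] := edge j jq.
rewrite big_nat_recr //= signr_addb IH; last by rewrite -ltnS ij ltnW.
by rewrite -mulrA -sigmaE.
Qed.

Lemma cover_path_W_conn s q : path cover_edge s q -> (0 < size q)%N ->
  W_conn adj sigma f s.1 (last s q).1.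
Proof.
move=> sq q0; exists (map fst q); split; last exact: last_map.
pose u := nth s (s :: q).
have nthE k : (k <= size q)%N -> nth s.1 (s.1 :: map fst q) k = (u k).1.
  by move=> kq; rewrite -[s.1 :: _]/(map fst (s :: q)) (nth_map s).
split.
  split; first by rewrite size_map.
  by rewrite path_map; apply: sub_path sq => x y /and4P [].
move=> i j ij; rewrite /= size_map ltnS => jq; have iq := ltnW (leq_trans ij jq).
rewrite !nthE // => Fi Fj _.
rewrite (eq_big_nat _ _ (F2 := fun k => sigma (u k).1 (u k.+1).1)); last first.
  by move=> k /andP [_ kj]; have kq := leq_trans kj jq; rewrite nthE ?(ltnW kq) // (nth_map s).
have /all_nthP adm := path_admissible sq q0.
have := adm s i iq; have := adm s j jq.
rewrite !admissibleE (negbTE Fi) (negbTE Fj) /= (cover_path_sign (i := i) sq); last first.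
  by rewrite (ltnW ij) jq.
rewrite -mulrA => pos_j pos_i; rewrite -mulrA.
by apply: (mulr_gt0_chain _ _ pos_j); rewrite ?signr_eq0 // mulrC.
Qed.

Lemma connect_W_conn s t : s.1 != t.1 -> connect cover_edge s t ->
  W_conn adj sigma f s.1 t.1.
Proof.
move=> st /connectP [[|u q] sq tE]; first by rewrite tE eqxx in st.
by rewrite tE; apply: cover_path_W_conn.
Qed.

Lemma W_conn_connect a b : W_conn adj sigma f a b -> exists ea eb,
  [/\ admissible (a, ea), admissible (b, eb) & connect cover_edge (a, ea) (b, eb)].
Proof.
case=> p [[[p0 walk] coherent] <-].
pose u := nth a (a :: p); pose sg k := sigma (u k) (u k.+1).
have edge k : (k < size p)%N -> adj (u k) (u k.+1) by apply: (pathP a walk).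
have sg0 k : (k < size p)%N -> sg k != 0.
  by move=> kp; rewrite /sg sigmaE ?signr_eq0 ?edge.
have [c pos] := sign_coherent_choice sg0
  (sign_coherent_of_consecutive (F := fun t => f (u t)) (fun i j ij jp => coherent i j ij jp)).
pose label t := c (+) \big[addb/false]_(0 <= k < t) (sg k < 0).
have label_sign t : (t <= size p)%N ->
    (-1) ^+ label t = (-1) ^+ c * \prod_(0 <= k < t) sg k :> R.
  move=> tp; rewrite signr_addb (@big_morph _ _ _ 1 _ false _ (@signr_addb R) (expr0 _)).
  congr (_ * _); apply: eq_big_nat => k /andP [_ kt].
  by rewrite /sg -sigmaE // edge // (leq_trans kt tp).
have adm t : (t <= size p)%N -> admissible (u t, label t).
  by move=> tp; rewrite admissibleE /=; case: eqP => //= /eqP Ft; rewrite label_sign // pos.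
have last_p : last a p = u (size p) by rewrite /u -[size p]/((size (a :: p)).-1) nth_last.
exists (label 0), (label (size p)); rewrite last_p; split; [exact: (adm 0%N) | exact: adm |].
apply/connectP; exists [seq (u t, label t) | t <- iota 1 (size p)].
  apply: (@path_map_iota _ cover_edge (fun t => (u t, label t))) => k kp.
  by rewrite /cover_edge /= edge // !adm ?(ltnW kp) // /label big_nat_recr //= addbA eqxx.
by rewrite (last_map (fun t => (u t, label t)) _ 0%N) last_iota.
Qed.

Lemma B_set_connect x y : B_set adj f x y -> exists c, connect cover_edge (x, c) (lift y).
Proof.
case=> p [+ <- +]; elim: p x => [|z p IH] x /=; first by exists (f x < 0).
move=> /andP [xz zp] /andP [fx zeros]; have [c zc] := IH z zp zeros.
exists (c (+) (sigma x z < 0)); apply: connect_trans (zc); apply: connect1.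
rewrite /cover_edge /= xz addbK eqxx /=; apply/andP; split; first by rewrite /admissible /= fx.
by apply: connect_admissible (admissible_lift (last z p)) _; rewrite cover_connect_sym.
Qed.

Lemma W_rel_connect w y : f w != 0 -> f y != 0 -> W_rel adj sigma f w y ->
  connect cover_edge (lift w) (lift y).
Proof.
move=> fw fy [<- | [] /W_conn_connect [ea [eb [adm_a adm_b ab]]]]; first exact: connect0.
  by rewrite -(admissible_nonzero fw adm_a) -(admissible_nonzero fy adm_b).
by rewrite cover_connect_sym -(admissible_nonzero fy adm_a) -(admissible_nonzero fw adm_b).
Qed.

Lemma weak_nodal_domainP w x : f w != 0 ->
  weak_nodal_domain adj sigma f w x <-> exists b, connect cover_edge (lift w) (x, b).
Proof.
move=> fw; split.
  case=> [[fx wx] | [y [[fy wy] /W_conn_connect [ex [ey [_ adm_y xy]]]]]].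
    by exists (f x < 0); apply: W_rel_connect.
  exists ex; apply: connect_trans (W_rel_connect fw fy wy) _.
  by rewrite cover_connect_sym -(admissible_nonzero fy adm_y).
case=> b wx; have [-> | xw] := eqVneq x w; first by left; split; [|left].
have wx' : W_conn adj sigma f w x.
  by apply: (connect_W_conn (s := lift w) (t := (x, b))); rewrite // eq_sym.
have [fx | fx] := eqVneq (f x) 0; last by left; split; [|right; left].
right; exists w; split; first by split; [|left].
by apply: (connect_W_conn (s := (x, b)) (t := lift w)); rewrite // cover_connect_sym.
Qed.

Lemma connect_weak_nodal_domain w w' : f w != 0 -> f w' != 0 ->
  connect cover_edge (lift w) (lift w') ->
  forall z, weak_nodal_domain adj sigma f w z <-> weak_nodal_domain adj sigma f w' z.
Proof.
move=> fw fw' ww' z; rewrite !weak_nodal_domainP //.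
have same := same_connect cover_connect_sym ww'.
by split=> -[c h]; exists c; rewrite ?same // -same.
Qed.
End SignedDoubleCover.

Theorem corollary3p9 (V : finType) (R : realFieldType)
  (adj : rel V) (sigma : V -> V -> R) (f : V -> R)
  (hG : signed_graph adj sigma)
  (hf : exists v, f v != 0)
  (w w' x : V)
  (hw : f w != 0) (hw' : f w' != 0)
  (hdist : ~ (forall z, weak_nodal_domain adj sigma f w z <->
                        weak_nodal_domain adj sigma f w' z))
  (hx : weak_nodal_domain adj sigma f w x)
  (hx' : weak_nodal_domain adj sigma f w' x) :
  (forall y, B_set adj f x y ->
     weak_nodal_domain adj sigma f w y \/ weak_nodal_domain adj sigma f w' y) /\
  (forall y, adj y x ->
     weak_nodal_domain adj sigma f w y \/ weak_nodal_domain adj sigma f w' y).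
Proof.
have [b wx] := (weak_nodal_domainP hG x hw).1 hx.
have [b' w'x] := (weak_nodal_domainP hG x hw').1 hx'.
have b'b : b' != b.
  apply/eqP=> b'b; apply/hdist/connect_weak_nodal_domain => //.
  by apply: connect_trans wx _; rewrite cover_connect_sym // -b'b.
have fx : f x = 0.
  apply/eqP; apply: contraTT b'b => fx; rewrite negbK.
  have [->] := admissible_nonzero fx (connect_admissible (admissible_lift f w) wx).
  by have [->] := admissible_nonzero fx (connect_admissible (admissible_lift f w') w'x).
have in_B y : B_set adj f x y ->
    weak_nodal_domain adj sigma f w y \/ weak_nodal_domain adj sigma f w' y.
  move=> /(B_set_connect hG) [c xy]; rewrite !(weak_nodal_domainP hG y) //.
  have [cb | cb] := eqVneq c b; [left | right]; exists (f y < 0).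
    by apply: connect_trans wx _; rewrite -cb.
  apply: connect_trans w'x _.
  by have -> : b' = c by move: b'b cb; case: (b); case: (b'); case: (c).
split=> // y yx; apply: in_B; exists [:: y].
by split; rewrite /= ?fx ?eqxx // andbT (adj_sym hG).
Qed.
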